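(* Let $G$ be a finite simple graph, $s\geq1$, and $e_1,\dots,e_s$ edges of $G$ (repetitions allowed). If $u$ and $v$ are vertices of $G$ (possibly $u=v$) that are even-connected with respect to $e_1\cdots e_s$, then $uv\in(I(G)^{s+1}:e_1\cdots e_s)$.
   Context: $S=K[\,x : x\in V(G)\,]$, $I(G)=(xy : xy\text{ an edge of } G)$, edges identified with degree-2 monomials, $(J:m)=\{f\in S: fm\in J\}$. Even-connection: vertices $u,v$ (possibly equal) are even-connected with respect to the sequence $e_1,\dots,e_s$ if there is a sequence of vertices $p_0,p_1,\dots,p_{2k+1}$ with $k\geq1$ (vertices may repeat) such that (1) $p_0=u$, $p_{2k+1}=v$; (2) for all $0\leq l\leq k-1$, $p_{2l+1}p_{2l+2}=e_i$ for some $i$; (3) for every $i$, $|\{l\geq0 : p_{2l+1}p_{2l+2}=e_i\}|\leq|\{j : e_j=e_i\}|$; (4) for all $0\leq r\leq 2k$, $p_rp_{r+1}$ is an edge of $G$. *)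

From mathcomp Require Import all_boot all_order all_algebra.
From mathcomp Require Import mpoly.
Set Implicit Arguments. Unset Strict Implicit. Unset Printing Implicit Defensive.
Import GRing.Theory.
Local Open Scope ring_scope.

Section Ideals.
Variable R : comNzRingType.

Definition ideal_gen (P : R -> Prop) (f : R) : Prop :=
  exists l : seq (R * R), (forall q, q \in l -> P q.2) /\
                          f = \sum_(q <- l) q.1 * q.2.

Definition ideal_mul (I J : R -> Prop) : R -> Prop :=
  ideal_gen (fun f => exists a b, I a /\ J b /\ f = a * b).

Fixpoint ideal_pow (I : R -> Prop) (k : nat) : R -> Prop :=
  match k with
  | 0 => ideal_gen (fun f => f = 1)
  | k'.+1 => ideal_mul (ideal_pow I k') I
  end.

Definition ideal_colon (J : R -> Prop) (m : R) : R -> Prop :=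
  fun f => J (f * m).
End Ideals.

Definition simple_graph (n : nat) (adj : rel 'I_n) : Prop :=
  ssrbool.symmetric adj /\ ssrbool.irreflexive adj.

Definition is_edge (n : nat) (adj : rel 'I_n) (E : {set 'I_n}) : Prop :=
  exists a b, adj a b /\ E = [set a; b].

Definition edge_ideal (K : fieldType) (n : nat) (adj : rel 'I_n)
  : {mpoly K[n]} -> Prop :=
  ideal_gen (fun f => exists a b, adj a b /\ f = 'X_a * 'X_b).

Definition edge_mon (K : fieldType) (n : nat) (E : {set 'I_n}) : {mpoly K[n]} :=
  \prod_(v in E) 'X_v.

(* Even-connection of u and v with respect to the sequence e_1..e_s
   (edges e : 'I_s -> {set 'I_n}); the vertex sequence p_0..p_{2k+1}
   is given by p : nat -> 'I_n (values beyond 2k+1 are irrelevant). *)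
Definition even_connected (n s : nat) (adj : rel 'I_n)
  (e : 'I_s -> {set 'I_n}) (u v : 'I_n) : Prop :=
  exists (k : nat) (p : nat -> 'I_n),
    [/\ (1 <= k)%N,
        p 0%N = u /\ p (2 * k + 1)%N = v,
        (forall l, (l < k)%N -> exists i : 'I_s,
              [set p (2 * l + 1)%N; p (2 * l + 2)%N] = e i),
        (forall i : 'I_s,
            (count (fun l => [set p (2 * l + 1)%N; p (2 * l + 2)%N] == e i)
                   (iota 0 k)
             <= count (fun j => e j == e i) (enum 'I_s))%N) &
        (forall r, (r <= 2 * k)%N -> adj (p r) (p r.+1))].

From mathcomp Require Import all_boot all_order all_algebra.
From mathcomp Require Import mpoly ring zify.
Set Implicit Arguments. Unset Strict Implicit. Unset Printing Implicit Defensive.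
Local Open Scope ring_scope.
Import GRing.Theory.

(* Write the walk as u = p_0, p_1, ..., p_{2k+1} = v.  Regrouping the product
   x_u (x_{p_1} x_{p_2}) ... (x_{p_{2k-1}} x_{p_{2k}}) x_v in the other way gives
   (x_{p_0} x_{p_1}) (x_{p_2} x_{p_3}) ... (x_{p_{2k}} x_{p_{2k+1}}), a product of
   k+1 edges of G.  The odd edges p_{2l+1} p_{2l+2} form a sub-multiset of
   e_1, ..., e_s, so x_u x_v e_1 ... e_s is the product of these k+1 edges and the
   s - k remaining e_i, i.e. of s+1 edges, and hence lies in I(G)^(s+1). *)

Lemma perm_eq_cat_of_count_le (T : eqType) (W S : seq T) :
  (forall x, (count_mem x W <= count_mem x S)%N) ->
  exists R, perm_eq S (W ++ R).
Proof.
elim: W S => [|x W IH] S leWS; first by exists S.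
have xS : x \in S.
  by rewrite -has_pred1 has_count; apply: leq_trans (leWS x); rewrite /= eqxx.
have [R HR] : exists R, perm_eq (rem x S) (W ++ R).
  apply: IH => y; have /= le_y := leWS y.
  by rewrite count_mem_rem leq_subRL //; apply: leq_trans le_y; rewrite leq_addr.
by exists R; apply: perm_trans (perm_to_rem xS) _; rewrite /= perm_cons.
Qed.

Lemma prod_walk_regroup (R : comNzRingType) (x : nat -> R) (k : nat) :
  x 0%N * (\prod_(0 <= l < k) (x (2 * l + 1)%N * x (2 * l + 2)%N)) * x (2 * k + 1)%N
  = \prod_(0 <= l < k.+1) (x (2 * l)%N * x (2 * l + 1)%N).
Proof.
elim: k => [|k IH]; first by rewrite big_nil big_nat1 mulr1 muln0.
rewrite big_nat_recr //= [in RHS]big_nat_recr //= -IH.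
have -> : (2 * k.+1 = 2 * k + 2)%N by rewrite mulnS addnC.
have -> : (2 * k + 2 + 1 = 2 * k + 3)%N by rewrite -addnA.
ring.
Qed.

Section IdealPowers.
Variables (R : comNzRingType) (I : R -> Prop).

Lemma ideal_gen_mem (P : R -> Prop) (f : R) : P f -> ideal_gen P f.
Proof.
move=> Pf; exists [:: (1, f)]; split; last by rewrite big_seq1 mul1r.
by move=> q; rewrite inE => /eqP ->.
Qed.

Lemma ideal_pow_prod (l : seq R) :
  (forall f, f \in l -> I f) -> ideal_pow I (size l) (\prod_(f <- l) f).
Proof.
elim: l => [|f l IH] Il /=; first by apply: ideal_gen_mem; rewrite big_nil.
apply: ideal_gen_mem; exists (\prod_(g <- l) g), f; rewrite big_cons mulrC.
split; first by apply: IH => g gl; apply: Il; rewrite inE gl orbT.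
by split => //; apply: Il; rewrite mem_head.
Qed.

End IdealPowers.

Definition odd_edges {n : nat} (p : nat -> 'I_n) (k : nat) : seq {set 'I_n} :=
  [seq [set p (2 * l + 1)%N; p (2 * l + 2)%N] | l <- iota 0 k].

Section EdgeIdeal.
Variables (K : fieldType) (n : nat) (adj : rel 'I_n).
Local Notation I := (@edge_ideal K n adj).

Lemma edge_ideal_X (a b : 'I_n) : adj a b -> I ('X_a * 'X_b).
Proof. by move=> ab; apply: ideal_gen_mem; exists a, b. Qed.

Lemma edge_mon_pair (a b : 'I_n) : a != b -> edge_mon K [set a; b] = 'X_a * 'X_b.
Proof. by move=> ab; rewrite /edge_mon big_setU1 ?in_set1 //= big_set1. Qed.

Lemma edge_ideal_edge_mon (E : {set 'I_n}) :
  irreflexive adj -> is_edge adj E -> I (edge_mon K E).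
Proof.
move=> irr [a [b [ab ->]]]; rewrite edge_mon_pair; first exact: edge_ideal_X.
by apply: contraTneq ab => ->; rewrite irr.
Qed.

Section Walk.
Variables (p : nat -> 'I_n) (k : nat).
Hypothesis irr : irreflexive adj.
Hypothesis walk : forall r, (r <= 2 * k)%N -> adj (p r) (p r.+1).

Lemma prod_odd_edges :
  \prod_(E <- odd_edges p k) edge_mon K E
  = \prod_(0 <= l < k) ('X_(p (2 * l + 1)%N) * 'X_(p (2 * l + 2)%N)).
Proof.
rewrite big_map /index_iota subn0 !big_seq; apply: eq_bigr => l.
rewrite mem_iota add0n => /andP [_ lk]; rewrite edge_mon_pair //.
have -> : (2 * l + 2 = (2 * l + 1).+1)%N by rewrite addnS.
have := @walk (2 * l + 1)%N ltac:(lia).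
by apply: contraTneq => <-; rewrite irr.
Qed.

Lemma even_edges_in_ideal (l : nat) :
  (l < k.+1)%N -> I ('X_(p (2 * l)%N) * 'X_(p (2 * l + 1)%N)).
Proof. by move=> lk; rewrite addn1; apply/edge_ideal_X/walk; lia. Qed.

End Walk.
End EdgeIdeal.

Lemma odd_edges_submultiset {n s : nat} {e : 'I_s -> {set 'I_n}}
    {p : nat -> 'I_n} {k : nat} :
  (forall l, (l < k)%N ->
     exists i, [set p (2 * l + 1)%N; p (2 * l + 2)%N] = e i) ->
  (forall i, (count (fun l => [set p (2 * l + 1)%N; p (2 * l + 2)%N] == e i)
                    (iota 0 k) <= count (fun j => e j == e i) (enum 'I_s))%N) ->
  exists R, perm_eq [seq e i | i <- enum 'I_s] (odd_edges p k ++ R).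
Proof.
move=> odd_in_e count_le; apply: perm_eq_cat_of_count_le => E.
have [/mapP [l]|/count_memPn -> //] := boolP (E \in odd_edges p k).
rewrite mem_iota add0n => /andP [_ lk] ->; have [i ->] := odd_in_e l lk.
by have := count_le i; rewrite !count_map.
Qed.

Theorem theorem6p5 (K : fieldType) (n : nat) (adj : rel 'I_n) (s : nat)
  (e : 'I_s -> {set 'I_n}) (u v : 'I_n) :
  simple_graph adj ->
  (1 <= s)%N ->
  (forall i, is_edge adj (e i)) ->
  even_connected adj e u v ->
  ideal_colon (ideal_pow (@edge_ideal K n adj) s.+1)
              (\prod_(i < s) @edge_mon K n (e i))
              ('X_u * 'X_v).
Proof.
move=> [_ irr] _ e_edge [k [p [_ [<- <-] odd_in_e count_le walk]]].
have [R permR] := odd_edges_submultiset odd_in_e count_le.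
set L := [seq 'X_(p (2 * l)%N) * 'X_(p (2 * l + 1)%N) | l <- index_iota 0 k.+1]
         ++ [seq edge_mon K E | E <- R] : seq {mpoly K[n]}.
have sizeL : size L = s.+1.
  have := perm_size permR; rewrite size_map size_enum_ord size_cat !size_map.
  by rewrite /L size_cat !size_map /index_iota !size_iota => ->.
have prodL : 'X_(p 0%N) * 'X_(p (2 * k + 1)%N) * \prod_(i < s) edge_mon K (e i)
             = \prod_(f <- L) f.
  rewrite -big_enum -(big_map e predT) (perm_big _ permR) big_cat.
  rewrite (prod_odd_edges K irr walk) big_cat !big_map -(prod_walk_regroup (fun r => 'X_(p r))) /=.
  by rewrite mulrA (mulrAC 'X_(p 0%N)).
rewrite /ideal_colon prodL -sizeL; apply: ideal_pow_prod => f.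
rewrite mem_cat => /orP [/mapP [l]|/mapP [E ER ->]].
  by rewrite mem_index_iota => /andP [_ lk] ->; apply: (even_edges_in_ideal K walk).
have /mapP [i _ ->] : E \in [seq e i | i <- enum 'I_s].
  by rewrite (perm_mem permR) mem_cat ER orbT.
exact: edge_ideal_edge_mon.
Qed.
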